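(* A collection $C:\mathbf{elTr}^{\mathrm{op}}\to\mathbf{Set}$ is isomorphic to $R_0(\mathsf P)=\mathrm{Hom}_{\mathbf{PolyEnd}}(-,\mathsf P)|_{\mathbf{elTr}}$ for some polynomial endofunctor $\mathsf P$ if and only if $C$ is flat, i.e. every colour-preserving surjection $Z\to C$ of collections admits a section.
   Context: A polynomial endofunctor is a diagram of sets $P_0\xleftarrow{s}P_2\xrightarrow{p}P_1\xrightarrow{t}P_0$ with $p$ having finite fibres; a morphism is a triple of maps commuting with $s,p,t$ whose middle square is a pullback; these form $\mathbf{PolyEnd}$. Elementary trees: the trivial tree $|=(1\leftarrow0\to0\to1)$ and, for each $n\in\mathbb N$, the one-node tree $\mathbf n=(n+1\xleftarrow{s}n\to1\xrightarrow{t}n+1)$ with $s,t$ the sum inclusions. $\mathbf{elTr}$ is the full subcategory of $\mathbf{PolyEnd}$ on these objects (it has $n+1$ arrows $|\to\mathbf n$ and $n!$ automorphisms of $\mathbf n$). A collection is a presheaf $C$ on $\mathbf{elTr}$; its set of colours is $C(|)$. A morphism of collections $Z\to C$ is colour preserving if its component at $|$ is a bijection (identity on colours), and it is a surjection if all its components are surjective. *)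

From mathcomp Require Import all_boot.
From Stdlib Require List.
From Stdlib Require Import FunctionalExtensionality ProofIrrelevance.
Set Implicit Arguments. Unset Strict Implicit. Unset Printing Implicit Defensive.

(* P0 <-s- P2 -p-> P1 -t-> P0, with p having finite fibres. *)
Record PolyEnd := {
  P0 : Type; P2 : Type; P1 : Type;
  ps : P2 -> P0; pp : P2 -> P1; pt : P1 -> P0;
  pfin : forall b : P1, exists l : list P2, forall e, pp e = b -> List.In e l }.

(* The middle square  E2 -> E1 / P2 -> P1  is a (set-theoretic) pullback:
   E2 -> E1 x_{P1} P2 is a bijection. *)
Definition is_pullback (E P : PolyEnd) (f2 : P2 E -> P2 P) (f1 : P1 E -> P1 P) :=
  forall (a : P1 E) (y : P2 P), f1 a = pp y ->
    exists! x : P2 E, pp x = a /\ f2 x = y.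

Record PolyHom (E P : PolyEnd) := {
  h0 : P0 E -> P0 P; h2 : P2 E -> P2 P; h1 : P1 E -> P1 P;
  hs : forall x, h0 (ps x) = ps (h2 x);
  hp : forall x, h1 (pp x) = pp (h2 x);
  ht : forall b, h0 (pt b) = pt (h1 b);
  hpb : is_pullback h2 h1 }.

Lemma idHom_pb (E : PolyEnd) : is_pullback (E:=E) (P:=E) id id.
Proof.
move=> a y /= ->; exists y; split; first by [].
by move=> x [_ ->].
Qed.

Definition idHom (E : PolyEnd) : PolyHom E E :=
  @Build_PolyHom E E id id id (fun _ => erefl) (fun _ => erefl) (fun _ => erefl)
    (@idHom_pb E).

Lemma compHom_pb (E F G : PolyEnd) (f : PolyHom E F) (g : PolyHom F G) :
  is_pullback (fun x => h2 g (h2 f x)) (fun a => h1 g (h1 f a)).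
Proof.
move=> a y Hay.
have [z [[Hz1 Hz2] Uz]] := (@hpb _ _ g) _ _ Hay.
have Haz : h1 f a = pp z by rewrite Hz1.
have [x [[Hx1 Hx2] Ux]] := (@hpb _ _ f) _ _ Haz.
exists x; split; first by split; [|rewrite Hx2].
move=> x' [Hx'1 Hx'2]; apply: Ux; split => //.
symmetry; apply: Uz; split => //; by rewrite -hp Hx'1.
Qed.

(* compHom f g = g o f *)
Definition compHom (E F G : PolyEnd) (f : PolyHom E F) (g : PolyHom F G) : PolyHom E G.
Proof.
refine (@Build_PolyHom E G (fun x => h0 g (h0 f x)) (fun x => h2 g (h2 f x))
          (fun a => h1 g (h1 f a)) _ _ _ (@compHom_pb _ _ _ f g)).
- by move=> x; rewrite hs hs.
- by move=> x; rewrite hp hp.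
- by move=> b; rewrite ht ht.
Defined.

Definition trivTree : PolyEnd.
Proof.
refine (@Build_PolyEnd unit Empty_set Empty_set
          (fun e => match e with end) (fun e => match e with end)
          (fun e => match e with end) _).
by case.
Defined.

(* one-node tree n = (n+1 <-s- n -> 1 -t-> n+1), s,t the sum inclusions
   (n+1 = n + 1 with the first summand {0..n-1} and second summand {n}). *)
Definition nodeTree (n : nat) : PolyEnd.
Proof.
refine (@Build_PolyEnd 'I_n.+1 'I_n unit
          (fun i => widen_ord (leqnSn n) i) (fun _ => tt) (fun _ => ord_max) _).
move=> b; exists (enum 'I_n) => e _.
have : e \in enum 'I_n by rewrite mem_enum.
elim: (enum 'I_n) => [|z l IH] //=; rewrite in_cons => /orP [/eqP ->|/IH]; by [left|right].
Defined.

Inductive elObj : Type := Triv | Node of nat.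

Definition tree (a : elObj) : PolyEnd :=
  match a with Triv => trivTree | Node n => nodeTree n end.

(* elTr is the full subcategory of PolyEnd on these objects:
   Hom_elTr(a,b) = PolyHom (tree a) (tree b). *)

Record Collection := {
  cobj : elObj -> Type;
  cmap : forall a b : elObj, PolyHom (tree a) (tree b) -> cobj b -> cobj a;
  cmap_id : forall a (x : cobj a), cmap (idHom (tree a)) x = x;
  cmap_comp : forall a b c (f : PolyHom (tree a) (tree b))
                (g : PolyHom (tree b) (tree c)) (x : cobj c),
      cmap (compHom f g) x = cmap f (cmap g x) }.

Definition colours (C : Collection) : Type := cobj C Triv.

Record CollHom (Z C : Collection) := {
  cmp : forall a, cobj Z a -> cobj C a;
  natural : forall a b (f : PolyHom (tree a) (tree b)) (x : cobj Z b),
      cmp (cmap f x) = cmap f (cmp x) }.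
Arguments cmp {Z C} c a _.

Definition bijective_map (A B : Type) (f : A -> B) :=
  exists g : B -> A, (forall x, g (f x) = x) /\ (forall y, f (g y) = y).

Definition colour_preserving (Z C : Collection) (u : CollHom Z C) :=
  bijective_map (cmp u Triv).

Definition coll_surjective (Z C : Collection) (u : CollHom Z C) :=
  forall a (y : cobj C a), exists x, cmp u a x = y.

Definition has_section (Z C : Collection) (u : CollHom Z C) :=
  exists v : CollHom C Z, forall a (y : cobj C a), cmp u a (cmp v a y) = y.

Definition flat (C : Collection) :=
  forall (Z : Collection) (u : CollHom Z C),
    colour_preserving u -> coll_surjective u -> has_section u.

Definition coll_iso (C D : Collection) :=
  exists (u : CollHom C D) (v : CollHom D C),
    (forall a x, cmp v a (cmp u a x) = x) /\ (forall a y, cmp u a (cmp v a y) = y).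

Lemma PolyHom_ext (E P : PolyEnd) (f g : PolyHom E P) :
  (forall x, h0 f x = h0 g x) -> (forall x, h2 f x = h2 g x) ->
  (forall x, h1 f x = h1 g x) -> f = g.
Proof.
case: f => f0 f2 f1 fs fp ft fpb; case: g => g0 g2 g1 gs gp gt gpb /= E0 E2 E1.
move: (functional_extensionality _ _ E0) (functional_extensionality _ _ E2)
      (functional_extensionality _ _ E1) => ???; subst.
f_equal; apply: proof_irrelevance.
Qed.

Definition R0 (P : PolyEnd) : Collection.
Proof.
refine (@Build_Collection (fun a => PolyHom (tree a) P)
          (fun a b f g => compHom f g) _ _).
- by move=> a g; apply: PolyHom_ext.
- by move=> a b c f g x; apply: PolyHom_ext.
Defined.

From mathcomp Require Import all_boot.
From Stdlib Require Import ClassicalEpsilon FunctionalExtensionality ProofIrrelevance PropExtensionality.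
Set Implicit Arguments. Unset Strict Implicit. Unset Printing Implicit Defensive.

(* Call a collection C free when, for every n, the group Aut(n) of automorphisms
   of the one-node tree n acts freely on C(n).  Both sides of the theorem are
   shown equivalent to freeness.
   - Morphisms of elTr: | -> P is a colour of P; there is no morphism n -> |;
     a morphism n -> m forces n = m and is a bijection of inputs.  Hence
     naturality need only be checked on edges | -> n and on automorphisms.
   - R0(P) is free, and freeness is reflected by any morphism into a free
     collection; so every R0(P), and everything isomorphic to one, is free.
   - Free implies flat: given a colour-preserving surjection Z -> C, lift a
     chosen representative of each orbit and transport the lift along the orbit.
   - Flat implies free: a section of the projection C x R0(A) -> C, with A the
     one-coloured endofunctor having one operation of each arity, maps C into
     the free collection R0(A).
   - A free C is isomorphic to R0(P_C), where P_C has the colours of C and the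
     orbit representatives of C(n) as operations of arity n. *)

Definition colourHom (P : PolyEnd) (c : P0 P) : PolyHom (tree Triv) P.
Proof.
refine (@Build_PolyHom (tree Triv) P (fun _ => c)
  (fun e => match e with end) (fun e => match e with end) _ _ _ _); by case.
Defined.

Lemma colourHomE (P : PolyEnd) (f : PolyHom (tree Triv) P) : f = colourHom (h0 f tt).
Proof. by apply: PolyHom_ext => -[]. Qed.

Lemma colourHom_comp (P Q : PolyEnd) (c : P0 P) (g : PolyHom P Q) :
  compHom (colourHom c) g = colourHom (h0 g c).
Proof. exact: colourHomE. Qed.

Definition edge (n : nat) (j : 'I_n.+1) : PolyHom (tree Triv) (tree (Node n)) :=
  @colourHom (tree (Node n)) j.

Lemma hom_triv_triv (f : PolyHom (tree Triv) (tree Triv)) : f = idHom _.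
Proof. by rewrite (colourHomE f) (colourHomE (idHom _)); case: (h0 f tt). Qed.

(* There is no morphism n -> |, since | has no node to receive the node of n. *)
Lemma no_hom_node_triv (n : nat) (f : PolyHom (tree (Node n)) (tree Triv)) : False.
Proof. by case: (h1 f tt). Qed.

Lemma lift_max_widen (k : nat) (i : 'I_k) : lift ord_max i = widen_ord (leqnSn k) i.
Proof. by apply: val_inj; rewrite /= /bump leqNgt ltn_ord. Qed.

Lemma ord_split (n : nat) (j : 'I_n.+1) :
  j = ord_max \/ exists i : 'I_n, j = widen_ord (leqnSn n) i.
Proof.
case: (unliftP ord_max j) => [i ->|->]; last by left.
by right; exists i; rewrite lift_max_widen.
Qed.

Section NodeHom.
Variables (n : nat) (P : PolyEnd) (g : PolyHom (tree (Node n)) P).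

Lemma node_h2_inj : injective (h2 g).
Proof.
move=> i j Eij.
have [x [_ Ux]] := hpb (hp g i).
by rewrite -(Ux i) ?(Ux j) //; split; case: (pp _).
Qed.

Lemma node_h2_onto (y : P2 P) : pp y = h1 g tt -> exists i, h2 g i = y.
Proof. by move=> Ey; have [x [[_ Hx] _]] := hpb (esym Ey); exists x. Qed.

Lemma node_h0_widen (i : 'I_n) : h0 g (widen_ord (leqnSn n) i) = ps (h2 g i).
Proof. exact: (hs g i). Qed.

Lemma node_h0_max : h0 g ord_max = pt (h1 g tt).
Proof. exact: (ht g tt). Qed.
End NodeHom.

Lemma node_hom_ext (n : nat) (P : PolyEnd) (g g' : PolyHom (tree (Node n)) P) :
  h2 g =1 h2 g' -> h1 g tt = h1 g' tt -> g = g'.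
Proof.
move=> E2 E1; apply: PolyHom_ext => //=; last by case.
move=> j; case: (ord_split j) => [->|[i ->]]; first by rewrite !node_h0_max E1.
by rewrite !node_h0_widen E2.
Qed.

(* Between one-node trees, the image of the node is forced. *)
Lemma node_node_ext (n m : nat) (g g' : PolyHom (tree (Node n)) (tree (Node m))) :
  h2 g =1 h2 g' -> g = g'.
Proof. by move=> E; apply: node_hom_ext => //; case: (h1 g tt); case: (h1 g' tt). Qed.

Lemma node_node_onto (n m : nat) (g : PolyHom (tree (Node n)) (tree (Node m))) (k : 'I_m) :
  exists i, h2 g i = k.
Proof. by apply: node_h2_onto; case: (h1 g tt). Qed.

Lemma card_le_onto (T T' : finType) (f : T -> T') :
  (forall y, exists x, f x = y) -> #|T'| <= #|T|.
Proof.
move=> f_onto; apply: leq_trans (leq_image_card f T).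
apply: subset_leq_card.
by apply/subsetP => y _; have [x <-] := f_onto y; exact: codom_f.
Qed.

Lemma node_arity (n m : nat) (g : PolyHom (tree (Node n)) (tree (Node m))) : n = m.
Proof.
apply/eqP; rewrite eqn_leq.
have g_inj : injective (h2 g : 'I_n -> 'I_m) := @node_h2_inj _ _ g.
have := @leq_card _ _ _ g_inj; rewrite !card_ord => ->.
by have := card_le_onto (T := 'I_n) (node_node_onto g); rewrite !card_ord.
Qed.

Section NodeHomOfBij.
Variables (n m : nat) (s : 'I_n -> 'I_m).
Hypotheses (s_inj : injective s) (s_onto : forall k, exists i, s i = k).

Definition vertex_map (j : 'I_n.+1) : 'I_m.+1 :=
  if unlift ord_max j is Some i then widen_ord (leqnSn m) (s i) else ord_max.

Definition nodeHom : PolyHom (tree (Node n)) (tree (Node m)).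
Proof.
refine (@Build_PolyHom (tree (Node n)) (tree (Node m)) vertex_map s id _ _ _ _).
- by move=> i /=; rewrite /vertex_map -lift_max_widen liftK.
- by [].
- by move=> b /=; rewrite /vertex_map unlift_none.
- move=> a y _; have [x Ex] := s_onto y.
  exists x; split; first by split; [case: a|].
  by move=> x' [_ Ex']; apply: s_inj; rewrite Ex Ex'.
Defined.
End NodeHomOfBij.

Definition Aut (n : nat) := PolyHom (tree (Node n)) (tree (Node n)).

Lemma natural_on_generators (C D : Collection) (w : forall a, cobj C a -> cobj D a) :
  (forall n (j : 'I_n.+1) (x : cobj C (Node n)),
      w Triv (cmap (edge j) x) = cmap (edge j) (w _ x)) ->
  (forall n (g : Aut n) (x : cobj C (Node n)), w _ (cmap g x) = cmap g (w _ x)) ->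
  forall a b (f : PolyHom (tree a) (tree b)) (x : cobj C b),
    w a (cmap f x) = cmap f (w b x).
Proof.
move=> w_edge w_aut [|n] [|m] f x.
- by rewrite (hom_triv_triv f) !cmap_id.
- by rewrite (colourHomE f); exact: w_edge.
- by case: (no_hom_node_triv f).
- by have e := node_arity f; subst m; exact: w_aut.
Qed.

Definition aut_inv (n : nat) (g : Aut n) : Aut n :=
  nodeHom (can_inj (f_invF (@node_h2_inj _ _ g)))
          (fun k => ex_intro _ (h2 g k) (invF_f (@node_h2_inj _ _ g) k)).

Lemma aut_invK (n : nat) (g : Aut n) : compHom (aut_inv g) g = idHom _.
Proof. by apply: node_node_ext => i /=; rewrite f_invF. Qed.

Definition free (C : Collection) :=
  forall n (x : cobj C (Node n)) (g g' : Aut n), cmap g x = cmap g' x -> g = g'.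

(* Aut(n) acts freely on Hom(n, P) since a morphism out of n is injective on
   inputs. *)
Lemma R0_free (P : PolyEnd) : free (R0 P).
Proof.
move=> n x g g' /= Egx; apply: node_node_ext => i; apply: (@node_h2_inj _ _ x).
exact: (f_equal (fun k => h2 k i) Egx).
Qed.

Lemma free_of_hom (C D : Collection) (u : CollHom C D) : free D -> free C.
Proof.
move=> D_free n x g g' Egx; apply: (D_free _ (cmp u _ x)).
by rewrite -!natural Egx.
Qed.

(* Every Aut(n)-orbit in C(n) has a chosen representative, and each element
   is the image of its representative under an automorphism, its transporter;
   when C is free the transporter is unique, hence compatible with the action. *)
Section Orbits.
Variable C : Collection.

Definition orbit (n : nat) (x y : cobj C (Node n)) : Prop :=
  exists g : Aut n, cmap g y = x.

Definition orbit_rep (n : nat) (x : cobj C (Node n)) : cobj C (Node n) :=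
  epsilon (inhabits x) (orbit x).

Lemma orbit_repP (n : nat) (x : cobj C (Node n)) : orbit x (orbit_rep x).
Proof. by apply: epsilon_spec; exists x, (idHom _); exact: cmap_id. Qed.

Lemma orbit_cmap (n : nat) (x : cobj C (Node n)) (g : Aut n) :
  orbit (cmap g x) = orbit x.
Proof.
apply: functional_extensionality => y; apply: propositional_extensionality.
split=> -[h Eh].
- by exists (compHom (aut_inv g) h); rewrite cmap_comp Eh -cmap_comp aut_invK cmap_id.
- by exists (compHom g h); rewrite cmap_comp Eh.
Qed.

Lemma orbit_rep_cmap (n : nat) (x : cobj C (Node n)) (g : Aut n) :
  orbit_rep (cmap g x) = orbit_rep x.
Proof.
rewrite /orbit_rep; move: (inhabits (cmap g x)) (inhabits x).
by rewrite orbit_cmap => i1 i2; rewrite (proof_irrelevance _ i1 i2).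
Qed.

Lemma orbit_rep_idem (n : nat) (x : cobj C (Node n)) : orbit_rep (orbit_rep x) = orbit_rep x.
Proof. by have [g Eg] := orbit_repP x; rewrite -{2}Eg orbit_rep_cmap. Qed.

Definition transporter (n : nat) (x : cobj C (Node n)) : Aut n :=
  proj1_sig (constructive_indefinite_description _ (orbit_repP x)).

Lemma transporterP (n : nat) (x : cobj C (Node n)) : cmap (transporter x) (orbit_rep x) = x.
Proof. by rewrite /transporter; case: constructive_indefinite_description. Qed.

Hypothesis C_free : free C.

Lemma transporter_unique (n : nat) (x : cobj C (Node n)) (g : Aut n) :
  cmap g (orbit_rep x) = x -> transporter x = g.
Proof. by move=> Eg; apply: (C_free (x := orbit_rep x)); rewrite transporterP. Qed.

Lemma transporter_cmap (n : nat) (x : cobj C (Node n)) (g : Aut n) :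
  transporter (cmap g x) = compHom g (transporter x).
Proof.
by apply: transporter_unique; rewrite orbit_rep_cmap cmap_comp transporterP.
Qed.
End Orbits.

(* Free implies flat: lift the orbit representatives along the surjection
   and transport the lifts along each orbit; on colours invert the bijection. *)
Lemma free_flat (C : Collection) : free C -> flat C.
Proof.
move=> C_free Z u [uinv [uinvK uK]] u_onto.
pose lift a (y : cobj C a) : cobj Z a :=
  proj1_sig (constructive_indefinite_description _ (u_onto a y)).
have liftK a y : cmp u a (lift a y) = y.
  by rewrite /lift; case: constructive_indefinite_description.
pose v a : cobj C a -> cobj Z a :=
  if a is Node n then fun x => cmap (transporter x) (lift _ (orbit_rep x)) else uinv.
have uv a y : cmp u a (v a y) = y.
  by case: a y => [|n] y /=; [exact: uK | rewrite natural liftK transporterP].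
have v_edge n (j : 'I_n.+1) x : v Triv (cmap (edge j) x) = cmap (edge j) (v _ x).
  by rewrite -[RHS]uinvK natural uv.
have v_aut n (g : Aut n) x : v _ (cmap g x) = cmap g (v _ x).
  by rewrite /= orbit_rep_cmap (transporter_cmap C_free) cmap_comp.
by exists (Build_CollHom (natural_on_generators v_edge v_aut)).
Qed.

Lemma In_enum (k : nat) (i : 'I_k) : List.In i (enum 'I_k).
Proof.
have : i \in enum 'I_k by rewrite mem_enum.
elim: (enum 'I_k) => [|z l IH] //=; rewrite in_cons => /orP [/eqP ->|/IH]; by [left|right].
Qed.

(* The polynomial endofunctor with one colour and one operation of each arity;
   R0 of it has a single colour and is inhabited at every one-node tree. *)
Definition Arities : PolyEnd.
Proof.
refine (@Build_PolyEnd unit {k : nat & 'I_k} nat (fun _ => tt) (@projT1 _ _) (fun _ => tt) _).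
move=> k; exists (List.map (fun i => existT (fun k => 'I_k) k i) (enum 'I_k)).
by case=> k' i /= <-; apply: List.in_map; exact: In_enum.
Defined.

Definition arityHom (n : nat) : PolyHom (tree (Node n)) Arities.
Proof.
refine (@Build_PolyHom (tree (Node n)) Arities (fun _ => tt)
   (fun i => existT (fun k => 'I_k) n i) (fun _ => n) _ _ _ _) => //.
move=> a [k i] /= Ek; subst k; exists i; split; first by split; [case: a|].
move=> x [_ Ex]; apply: val_inj.
by have := f_equal (fun y : {k : nat & 'I_k} => nat_of_ord (projT2 y)) Ex.
Defined.

Definition Prod (C D : Collection) : Collection.
Proof.
refine (@Build_Collection (fun a => (cobj C a * cobj D a)%type)
  (fun a b f x => (cmap f x.1, cmap f x.2)) _ _).
- by move=> a [x y] /=; rewrite !cmap_id.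
- by move=> a b c f g [x y] /=; rewrite !cmap_comp.
Defined.

Definition fstHom (C D : Collection) : CollHom (Prod C D) C :=
  @Build_CollHom (Prod C D) C (fun a x => x.1) (fun _ _ _ _ => erefl).

Definition sndHom (C D : Collection) : CollHom (Prod C D) D :=
  @Build_CollHom (Prod C D) D (fun a x => x.2) (fun _ _ _ _ => erefl).

Definition collHom_comp (C D E : Collection) (u : CollHom C D) (w : CollHom D E) :
  CollHom C E.
Proof.
refine (@Build_CollHom C E (fun a x => cmp w a (cmp u a x)) _).
by move=> a b f x; rewrite !natural.
Defined.

(* Flat implies free: the first projection C x R0(Arities) -> C is a
   colour-preserving surjection; its section followed by the second projection
   is a morphism into the free collection R0(Arities). *)
Lemma flat_free (C : Collection) : flat C -> free C.
Proof.
move=> C_flat.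
have fst_cp : colour_preserving (fstHom C (R0 Arities)).
  exists (fun c => (c, colourHom (tt : P0 Arities))); split=> [[c f]|c] //=.
  by rewrite [f]colourHomE; case: (h0 f tt).
have fst_onto : coll_surjective (fstHom C (R0 Arities)).
  by case=> [|n] x; [exists (x, colourHom (tt : P0 Arities)) | exists (x, arityHom n)].
have [v _] := C_flat _ _ fst_cp fst_onto.
exact: free_of_hom (collHom_comp v (sndHom _ _)) (@R0_free Arities).
Qed.

Lemma bij_iso (C D : Collection) (u : CollHom C D) :
  (forall a, injective (cmp u a)) -> (forall a (y : cobj D a), exists x, cmp u a x = y) ->
  coll_iso C D.
Proof.
move=> u_inj u_onto.
pose v a (y : cobj D a) := proj1_sig (constructive_indefinite_description _ (u_onto a y)).
have uv a y : cmp u a (v a y) = y by rewrite /v; case: constructive_indefinite_description.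
have v_nat a b (f : PolyHom (tree a) (tree b)) (y : cobj D b) :
    v a (cmap f y) = cmap f (v b y).
  by apply: u_inj; rewrite natural !uv.
by exists u, (Build_CollHom v_nat); split=> a x //=; apply: u_inj; rewrite uv.
Qed.

(* A free collection C is represented by the polynomial endofunctor P_C whose
   colours are those of C, whose operations are the chosen orbit
   representatives r in C(n), with inputs 'I_n, and whose source and target
   maps restrict r along the edges of the one-node tree. *)
Section Representation.
Variable C : Collection.
Hypothesis C_free : free C.

Definition Op := {n : nat & {r : cobj C (Node n) | orbit_rep r = r}}.
Definition arity (o : Op) : nat := projT1 o.
Definition opRep (o : Op) : cobj C (Node (arity o)) := proj1_sig (projT2 o).
Definition Input := {o : Op & 'I_(arity o)}.

Definition inputColour (y : Input) : colours C :=
  cmap (edge (widen_ord (leqnSn _) (projT2 y))) (opRep (projT1 y)).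
Definition outputColour (o : Op) : colours C := cmap (edge ord_max) (opRep o).

Definition PC : PolyEnd.
Proof.
refine (@Build_PolyEnd (colours C) Input Op inputColour (@projT1 _ _) outputColour _).
move=> o; exists (List.map (fun i => existT (fun o : Op => 'I_(arity o)) o i) (enum 'I_(arity o))).
by case=> o' i /= <-; apply: List.in_map; exact: In_enum.
Defined.

Lemma Input_eq (y z : Input) :
  projT1 y = projT1 z -> val (projT2 y) = val (projT2 z) -> y = z.
Proof. by case: y z => o i [o' j] /= Eo; subst o' => Eij; congr existT; exact: val_inj. Qed.

Lemma Op_eq (n : nat) (r r' : cobj C (Node n)) p p' :
  r = r' -> existT _ n (exist _ r p) = existT _ n (exist _ r' p') :> Op.
Proof. by move=> Er; subst r'; rewrite (proof_irrelevance _ p p'). Qed.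

Definition opOf (n : nat) (x : cobj C (Node n)) : Op :=
  existT _ n (exist _ (orbit_rep x) (orbit_rep_idem x)).

Lemma opOf_inj (n : nat) (x y : cobj C (Node n)) :
  opOf x = opOf y -> orbit_rep x = orbit_rep y.
Proof.
move=> Exy; have := Eqdep_dec.inj_pair2_eq_dec _ PeanoNat.Nat.eq_dec _ _ _ _ Exy.
by move/(f_equal (@proj1_sig _ _)).
Qed.

(* An element x of C(n) gives the morphism n -> P_C sending the node to the
   operation of x, and the inputs to those of the operation through the
   transporter of x. *)
Definition nodeRep (n : nat) (x : cobj C (Node n)) : PolyHom (tree (Node n)) PC.
Proof.
pose tr_inj := @node_h2_inj _ _ (transporter x).
refine (@Build_PolyHom (tree (Node n)) PC (fun j => cmap (edge j) x)
  (fun i => existT (fun o : Op => 'I_(arity o)) (opOf x) (h2 (transporter x) i))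
  (fun _ => opOf x) _ _ _ _).
- move=> i /=; rewrite /inputColour /= -{1}(transporterP x) -cmap_comp.
  by rewrite colourHom_comp node_h0_widen.
- by [].
- move=> b /=; rewrite /outputColour /= -{1}(transporterP x) -cmap_comp.
  by rewrite colourHom_comp node_h0_max.
- move=> a [o k] /= Eo; subst o.
  exists (invF tr_inj k); split; first by split; [case: a | rewrite f_invF].
  move=> i [_ Ei]; rewrite -(invF_f tr_inj i); congr invF; apply: val_inj.
  by have := f_equal (fun y : Input => nat_of_ord (projT2 y)) Ei.
Defined.

Definition represent (a : elObj) : cobj C a -> cobj (R0 PC) a :=
  if a is Node n then @nodeRep n else @colourHom PC.

Lemma represent_nat (a b : elObj) (f : PolyHom (tree a) (tree b)) (x : cobj C b) :
  represent (cmap f x) = cmap f (represent x).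
Proof.
apply: natural_on_generators => [n j y | n g y] /=; first by rewrite colourHom_comp.
have Eop : opOf (cmap g y) = opOf y by apply: Op_eq; rewrite orbit_rep_cmap.
apply: node_hom_ext => [i|] /=; last exact: Eop.
by apply: Input_eq => /=; rewrite ?Eop // (transporter_cmap C_free).
Qed.

Definition representHom : CollHom C (R0 PC) := Build_CollHom represent_nat.

Lemma represent_inj (a : elObj) : injective (cmp representHom a).
Proof.
case: a => [|n] x y /= Exy.
  by have := f_equal (fun k : PolyHom (tree Triv) PC => h0 k tt) Exy.
have Erep : orbit_rep x = orbit_rep y.
  by apply: opOf_inj; have := f_equal (fun k : PolyHom (tree (Node n)) PC => h1 k tt) Exy.
have Etr : transporter x = transporter y.
  apply: node_node_ext => i; apply: val_inj.
  by have := f_equal (fun k : PolyHom (tree (Node n)) PC => nat_of_ord (projT2 (h2 k i))) Exy.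
by rewrite -(transporterP x) -(transporterP y) Erep Etr.
Qed.

Lemma input_slots (n : nat) (phi : PolyHom (tree (Node n)) PC) (o : Op) :
  h1 phi tt = o ->
  exists2 s : 'I_n -> 'I_(arity o), injective s /\ (forall k, exists i, s i = k)
    & forall i, h2 phi i = existT _ o (s i).
Proof.
move=> Eo.
have Eop i : projT1 (h2 phi i) = o by rewrite -Eo; exact: esym (hp phi i).
have slot_lt i : val (projT2 (h2 phi i)) < arity o by rewrite -(Eop i); exact: ltn_ord.
exists (fun i => Ordinal (slot_lt i)); last by move=> i; apply: Input_eq.
split=> [i j /(f_equal val) /= Eij | k].
  by apply: (@node_h2_inj _ _ phi); apply: Input_eq; [rewrite !Eop | exact: Eij].
have [i Ei] := @node_h2_onto _ _ phi (existT _ o k) (esym Eo).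
by exists i; apply: val_inj; rewrite /= Ei.
Qed.

Lemma represent_onto (a : elObj) (phi : cobj (R0 PC) a) :
  exists x, cmp representHom a x = phi.
Proof.
case: a phi => [|n] phi /=; first by exists (h0 phi tt); rewrite -colourHomE.
case Eo: (h1 phi tt) => [m [r r_rep]].
have [s [s_inj s_onto] Es] := input_slots Eo.
pose g := nodeHom s_inj s_onto.
have Enm : n = m := node_arity g; subst m.
have Eop : opOf (cmap g r) = existT _ n (exist _ r r_rep).
  by apply: Op_eq; rewrite orbit_rep_cmap.
have Etr : transporter (cmap g r) = g.
  by apply: (transporter_unique C_free); rewrite orbit_rep_cmap r_rep.
exists (cmap g r); apply: node_hom_ext => [i|] /=; last by rewrite Eo Eop.
by rewrite Es; apply: Input_eq; rewrite /= ?Eop ?Etr.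
Qed.

Lemma free_represented : coll_iso C (R0 PC).
Proof. exact: bij_iso represent_inj represent_onto. Qed.
End Representation.

Theorem mainTheorem20 (C : Collection) :
  (exists P : PolyEnd, coll_iso C (R0 P)) <-> flat C.
Proof.
split=> [[P [u _]] | C_flat].
- exact: free_flat (free_of_hom u (@R0_free P)).
- exact: ex_intro _ (PC C) (free_represented (flat_free C_flat)).
Qed.
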